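(* For every natural number $d>1$ and every $\varepsilon>0$ there are $L,D>0$ such that the following holds. Let $G=(V_1,V_2,E)$ be a bipartite graph and let $u_1,\ldots,u_L\in V_1$ be such that $S_i:=N(u_i)\setminus\bigcup_{j<i}N(u_j)$ satisfies $|S_i|\ge D$ for all $i\in[L]$. If $W\subset V_2$ is chosen uniformly at random among all subsets of $V_2$, then with probability at least $1-\varepsilon$ the following holds: for every pair $(k,m)$ of integers with $0\le k\le m$ and $2\le m\le d$ there is $i\in[L]$ with $d^W(u_i)\equiv k\pmod m$.
   Context: A bipartite graph $G=(V_1,V_2,E)$ has vertex set $V_1\sqcup V_2$ and edge set $E\subset V_1\times V_2$; $N(v)$ is the neighbourhood of $v$ and $d^W(v)=|N(v)\cap W|$. *)

From HB Require Import structures.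
From mathcomp Require Import all_boot all_order all_algebra.
From mathcomp Require Import reals.
Set Implicit Arguments. Unset Strict Implicit. Unset Printing Implicit Defensive.
Import Order.TTheory GRing.Theory Num.Theory.

Definition nbhd (V1 V2 : finType) (E : {set V1 * V2}) (v : V1) : {set V2} :=
  [set w | (v, w) \in E].

Definition degW (V1 V2 : finType) (E : {set V1 * V2}) (W : {set V2}) (v : V1)
  : nat := #|nbhd E v :&: W|.

(* S_i := N(u_i) \ \bigcup_{j<i} N(u_j), indices 0..L-1 *)
Definition Snew (V1 V2 : finType) (E : {set V1 * V2}) (L : nat)
  (u : 'I_L -> V1) (i : 'I_L) : {set V2} :=
  nbhd E (u i) :\: \bigcup_(j < L | (j < i)%N) nbhd E (u j).

Definition prob_subset (R : realType) (V2 : finType) (P : pred {set V2}) : R :=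
  (#|[set W : {set V2} | P W]|%:R / (2 ^ #|V2|)%:R)%R.

From HB Require Import structures.
From mathcomp Require Import all_boot all_order all_algebra.
From mathcomp Require Import reals.
From mathcomp Require Import zify ring lra.
Import Order.TTheory GRing.Theory Num.Theory.
Set Implicit Arguments. Unset Strict Implicit.

(* Fix a residue k mod m and let M_t be the set of W for which none of
   d^W(u_1), ..., d^W(u_t) is k mod m.  Membership in M_t does not depend on
   W restricted to S_(t+1), and changing W on s >= m - 1 points of S_(t+1)
   reaches every residue of d^W(u_(t+1)); hence at least a 2^-s fraction of
   M_t is not in M_(t+1), and |M_L| <= 2^|V2| (1 - 2^-s)^L.  For
   L = (2^s - 1) C, Bernoulli's inequality bounds (1 - 2^-s)^L by 1/C, and a
   union bound over the at most (d+1)^2 pairs (k, m) concludes with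
   C = (d+1)^2 N, N > 1/eps. *)

Lemma card_set_finType (T : finType) : #|{set T}| = 2 ^ #|T|.
Proof. by have := card_powerset [set: T]; rewrite powersetT !cardsT. Qed.

Lemma leq_card_subset_bigcup (I T : finType) (P : pred I) (F : I -> {set T})
    (A : {set T}) :
  A \subset \bigcup_(i | P i) F i -> (#|A| <= \sum_(i | P i) #|F i|)%N.
Proof.
move/subset_leq_card/leq_trans; apply.
elim/big_rec2: _ => [|i n U _ leUn]; first by rewrite cards0.
exact: leq_trans (leq_card_setU _ _) (leq_add _ leUn).
Qed.

Lemma subset_of_card (T : finType) (A : {set T}) (n : nat) :
  (n <= #|A|)%N -> exists2 B : {set T}, B \subset A & #|B| = n.
Proof.
case/card_geqP=> s [uniq_s <- sA].
exists [set x in s]; first by apply/subsetP=> x; rewrite inE => /sA.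
by rewrite cardsE; apply/card_uniqP.
Qed.

Lemma exists_mod_shift (r k m : nat) :
  (0 < m)%N -> exists2 j, (j < m)%N & r + j = k %[mod m].
Proof.
move=> m_gt0; exists ((m - r %% m + k) %% m); first exact: ltn_pmod.
rewrite modnDmr addnA -modnDml.
have -> : r + (m - r %% m) = r %/ m * m + m.
  by rewrite {1}(divn_eq r m); have := ltn_pmod r m_gt0; lia.
by rewrite modnMDl modnn.
Qed.

(* S is covered by the 2^|A| modifications inside A of the members of G. *)
Lemma card_le_fibres (T : finType) (A : {set T}) (S G : {set {set T}}) :
  (forall W, W \in S -> exists2 W', W' \in G & W' :\: A = W :\: A) ->
  (#|S| <= #|G| * 2 ^ #|A|)%N.
Proof.
move=> fibreS; pose glue (p : {set T} * {set T}) := (p.1 :\: A) :|: p.2.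
have coverS : S \subset glue @: setX G (powerset A).
  apply/subsetP=> W /fibreS [W' GW' eqW']; apply/imsetP.
  exists (W', W :&: A); first by rewrite inE /= GW' inE subsetIr.
  by rewrite /glue /= eqW' setUC setID.
apply: leq_trans (subset_leq_card coverS) _.
by apply: leq_trans (leq_imset_card _ _) _; rewrite cardsX card_powerset.
Qed.

Lemma exists_mod_hit (T : finType) (A N X : {set T}) (k m : nat) :
  A \subset N -> (0 < m)%N -> (m <= #|A|.+1)%N ->
  exists2 W, W :\: A = X :\: A & #|N :&: W| == k %[mod m].
Proof.
move=> sAN m_gt0 m_le; set X' := X :\: A.
have [j j_lt_m eq_j] := exists_mod_shift #|N :&: X'| k m_gt0.
have /subset_of_card [Y sYA cardY] : (j <= #|A|)%N by lia.
have disjX'Y : [disjoint X' & Y].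
  by rewrite disjoint_sym disjoints_subset setCD (subset_trans sYA) ?subsetUr.
exists (X' :|: Y).
  rewrite setDUl setDDl setUid (_ : Y :\: A = set0) ?setU0 //.
  by apply/eqP; rewrite setD_eq0.
rewrite setIUr (setIidPr (subset_trans sYA sAN)) cardsU.
rewrite (_ : _ :&: _ :&: _ = set0) ?cards0 ?subn0 ?cardY ?eq_j //.
by apply/eqP; rewrite setI_eq0 (disjointWl (subsetIr _ _)).
Qed.

Lemma card_mod_hit (T : finType) (A N : {set T}) (P : pred {set T}) (k m : nat) :
  A \subset N -> (0 < m)%N -> (m <= #|A|.+1)%N ->
  (forall W, P W = P (W :\: A)) ->
  (#|[set W | P W]| <= #|[set W | P W && (#|N :&: W| == k %[mod m])]| * 2 ^ #|A|)%N.
Proof.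
move=> sAN m_gt0 m_le PA; apply: card_le_fibres => W; rewrite inE => PW.
have [W' eqW' hitW'] := exists_mod_hit W k sAN m_gt0 m_le.
by exists W'; rewrite // inE PA eqW' -PA PW.
Qed.

Lemma bernoulli_expn (a n : nat) : (a ^ n * (a + n) <= a.+1 ^ n * a)%N.
Proof.
elim: n => [|n IHn]; first by rewrite !expn0 addn0.
by move: IHn; rewrite !expnS; set p := a ^ n; set q := a.+1 ^ n; nia.
Qed.

Lemma bernoulli_expn_mul (a n : nat) :
  (0 < a)%N -> (a ^ (a * n) * n.+1 <= a.+1 ^ (a * n))%N.
Proof.
move=> a_gt0; rewrite -(leq_pmul2r a_gt0) -mulnA.
by apply: leq_trans (bernoulli_expn a (a * n)); rewrite leq_mul2l mulSn mulnC leqnn orbT.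
Qed.

Lemma exp2_subn1_gt0 (s : nat) : (0 < s)%N -> (0 < 2 ^ s - 1)%N.
Proof. by move=> s_gt0; rewrite subn_gt0 (leq_ltn_trans s_gt0 (ltn_expl _ _)). Qed.

Section MissedResidue.
Variables (V1 V2 : finType) (E : {set V1 * V2}) (L : nat) (u : 'I_L -> V1).
Variables (k m : nat).

Definition misses_residue (t : nat) (W : {set V2}) : bool :=
  [forall i : 'I_L, (i < t)%N ==> (degW E W (u i) != k %[mod m])].

Lemma misses_residueS (i0 : 'I_L) (W : {set V2}) :
  misses_residue i0.+1 W =
  misses_residue i0 W && (degW E W (u i0) != k %[mod m]).
Proof.
apply/forallP/andP=> [missW | [/forallP missW hitW] i].
  split; last by have := missW i0; rewrite ltnSn.
  by apply/forallP=> i; apply/implyP=> lt_i; apply: (implyP (missW i)); rewrite ltnW.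
apply/implyP; rewrite ltnS leq_eqVlt => /orP [/eqP/val_inj -> // | lt_i].
exact: (implyP (missW i)).
Qed.

Lemma misses_residue_setD (i0 : 'I_L) (A : {set V2}) :
  A \subset Snew E u i0 -> forall W, misses_residue i0 W = misses_residue i0 (W :\: A).
Proof.
move=> sAS W; apply: eq_forallb => i; case: ltnP => //= lt_i; rewrite /degW.
suff -> : nbhd E (u i) :&: (W :\: A) = nbhd E (u i) :&: W by [].
apply/setP=> x; rewrite !inE; case: (boolP (x \in A)) => //= xA.
have := subsetP sAS x xA; rewrite /Snew in_setD => /andP [notNj _].
suff /negbTE -> : (u i, x) \notin E by [].
by apply: contra notNj => xE; apply/bigcupP; exists i; rewrite ?inE.
Qed.

Lemma card_misses_residueS (s : nat) (i0 : 'I_L) :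
  (s <= #|Snew E u i0|)%N -> (0 < m)%N -> (m <= s.+1)%N ->
  (#|[set W | misses_residue i0.+1 W]| * 2 ^ s <=
   #|[set W | misses_residue i0 W]| * (2 ^ s - 1))%N.
Proof.
move=> /subset_of_card [A sAS cardA] m_gt0; rewrite -cardA => m_le.
have sAN : A \subset nbhd E (u i0) by apply: subset_trans sAS (subsetDl _ _).
have := card_mod_hit k sAN m_gt0 m_le (misses_residue_setD sAS).
set X := [set W | misses_residue i0 W].
set Hit := [set W | degW E W (u i0) == k %[mod m]].
rewrite (_ : [set W | _ && _] = X :&: Hit); last by apply/setP=> W; rewrite !inE.
rewrite (_ : [set W | misses_residue i0.+1 W] = X :\: Hit); last first.
  by apply/setP=> W; rewrite !inE misses_residueS andbC.
have := cardsID Hit X; have : (0 < 2 ^ #|A|)%N by rewrite expn_gt0.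
nia.
Qed.

Lemma card_misses_residue (s : nat) :
  (forall i, s <= #|Snew E u i|)%N -> (0 < m)%N -> (m <= s.+1)%N ->
  forall t, (t <= L)%N ->
  (#|[set W | misses_residue t W]| * (2 ^ s) ^ t <= 2 ^ #|V2| * (2 ^ s - 1) ^ t)%N.
Proof.
move=> leS m_gt0 m_le; elim=> [|t IHt] lt_tL.
  by rewrite !expn0 !muln1 -card_set_finType max_card.
have /= stepS := card_misses_residueS (leS (Ordinal lt_tL)) m_gt0 m_le.
rewrite !expnS mulnA; apply: leq_trans (leq_mul stepS (leqnn _)) _.
by rewrite mulnAC [(_ - 1) * _]mulnC mulnA leq_mul2r IHt ?orbT // ltnW.
Qed.

Lemma card_misses_residue_all (s C : nat) :
  L = ((2 ^ s - 1) * C)%N -> (forall i, s <= #|Snew E u i|)%N ->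
  (1 < m)%N -> (m <= s.+1)%N ->
  (#|[set W | misses_residue L W]| * C <= 2 ^ #|V2|)%N.
Proof.
move=> defL leS m_gt1 m_le; set a := (2 ^ s - 1)%N.
have a_gt0 : (0 < a)%N by rewrite exp2_subn1_gt0 //; lia.
have missL := card_misses_residue leS (ltnW m_gt1) m_le (leqnn L).
have powL : (a ^ L * C <= (2 ^ s) ^ L)%N.
  have -> : (2 ^ s = a.+1)%N by rewrite /a subn1 prednK ?expn_gt0.
  by rewrite defL; apply: leq_trans (bernoulli_expn_mul C a_gt0); rewrite leq_mul2l leqnSn orbT.
rewrite -(leq_pmul2r (_ : 0 < a ^ L)%N) ?expn_gt0 ?a_gt0 //.
by apply: leq_trans missL; rewrite mulnAC -mulnA leq_mul2l powL orbT.
Qed.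

End MissedResidue.

Definition hits_all_residues (V1 V2 : finType) (E : {set V1 * V2}) (L : nat)
    (u : 'I_L -> V1) (d : nat) (W : {set V2}) : bool :=
  [forall k : 'I_d.+1, forall m : 'I_d.+1, ((k <= m) && (2 <= m)) ==>
     [exists i : 'I_L, degW E W (u i) == k %[mod m]]].

Lemma card_not_hits_all_residues (V1 V2 : finType) (E : {set V1 * V2}) (L : nat)
    (u : 'I_L -> V1) (d s C : nat) :
  L = ((2 ^ s - 1) * C)%N -> (forall i, s <= #|Snew E u i|)%N -> (d <= s.+1)%N ->
  (#|[set W | ~~ hits_all_residues E u d W]| * C <= d.+1 ^ 2 * 2 ^ #|V2|)%N.
Proof.
move=> defL leS le_d.
pose valid (p : 'I_d.+1 * 'I_d.+1) := ((p.1 <= p.2) && (2 <= p.2))%N.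
have cover : [set W | ~~ hits_all_residues E u d W] \subset
    \bigcup_(p | valid p) [set W | misses_residue E u p.1 p.2 L W].
  apply/subsetP=> W; rewrite !inE negb_forall => /existsP [k].
  rewrite negb_forall => /existsP [m]; rewrite negb_imply negb_exists.
  case/andP=> vkm /forallP missW; apply/bigcupP; exists (k, m) => //.
  by rewrite inE; apply/forallP=> i; rewrite ltn_ord; apply: missW.
have le_pair p : valid p ->
    (#|[set W | misses_residue E u p.1 p.2 L W]| * C <= 2 ^ #|V2|)%N.
  case/andP=> _ m_gt1; apply: (card_misses_residue_all _ defL leS m_gt1).
  by apply: leq_trans _ le_d; rewrite -ltnS ltn_ord.
apply: leq_trans (leq_mul (leq_card_subset_bigcup cover) (leqnn C)) _.
rewrite big_distrl /=; apply: leq_trans (leq_sum _ le_pair) _.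
rewrite sum_nat_const leq_mul2r; apply/orP; right.
by apply: leq_trans (max_card _) _; rewrite card_prod card_ord mulnn.
Qed.

Lemma prob_subsetC (R : realType) (V2 : finType) (P : pred {set V2}) :
  prob_subset R P = (1 - prob_subset R (predC P))%R.
Proof.
have total : (#|[set W | P W]| + #|[set W | predC P W]| = 2 ^ #|V2|)%N.
  rewrite -card_set_finType -(cardsC [set W | P W]); congr (_ + _).
  by apply: eq_card => W; rewrite !inE.
have total_neq0 : ((#|[set W | P W]| + #|[set W | predC P W]|)%:R != 0 :> R)%R.
  by rewrite total pnatr_eq0 expn_eq0.
rewrite /prob_subset -total; rewrite natrD in total_neq0 *; by field.
Qed.

Lemma prob_subset_le_inv (R : realType) (V2 : finType) (P : pred {set V2}) (N : nat) :
  (0 < N)%N -> (#|[set W | P W]| * N <= 2 ^ #|V2|)%N -> (prob_subset R P <= N%:R^-1)%R.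
Proof.
move=> N_gt0 le_card; rewrite /prob_subset ler_pdivrMr ?ltr0n ?expn_gt0 //.
by rewrite mulrC ler_pdivlMr ?ltr0n // -natrM ler_nat.
Qed.

Theorem lemma3p5 (R : realType) (d : nat) (eps : R) :
  (1 < d)%N -> (0 < eps)%R ->
  exists L D : nat, (0 < L)%N /\ (0 < D)%N /\
    forall (V1 V2 : finType) (E : {set V1 * V2}) (u : 'I_L -> V1),
      (forall i : 'I_L, (D <= #|Snew E u i|)%N) ->
      (1 - eps <= prob_subset R
         (fun W : {set V2} =>
            [forall k : 'I_d.+1, forall m : 'I_d.+1,
               ((k <= m)%N && (2 <= m)%N) ==>
               [exists i : 'I_L, degW E W (u i) == k %[mod m]]]))%R.
Proof.
move=> d_gt1 eps_gt0.
pose N := (Num.bound eps^-1).+1.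
have invN_lt_eps : (N%:R^-1 < eps)%R.
  rewrite -[eps]invrK ltf_pV2 ?posrE ?invr_gt0 ?ltr0n //.
  apply: lt_le_trans (archi_boundP _) _; last by rewrite ler_nat.
  by rewrite invr_ge0 ltW.
set s := d.-1; pose C := (d.+1 ^ 2 * N)%N.
have s_gt0 : (0 < s)%N by lia.
exists ((2 ^ s - 1) * C)%N, s; split; last split => //.
  by rewrite !muln_gt0 exp2_subn1_gt0 ?expn_gt0.
move=> V1 V2 E u leS; rewrite prob_subsetC.
suff : (prob_subset R (predC (hits_all_residues E u d)) <= N%:R^-1)%R by lra.
apply: prob_subset_le_inv => //.
rewrite -(leq_pmul2l (_ : 0 < d.+1 ^ 2)%N) ?expn_gt0 // mulnCA.
have le_d : (d <= s.+1)%N by rewrite /s prednK // ltnW.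
exact: card_not_hits_all_residues erefl leS le_d.
Qed.
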